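(* Let $(X,d)$ and $(Y,\rho)$ be compact metric spaces, let $F=\{f_1,\dots,f_k\}$ be a multiple mapping on $X$ and $G=\{g_1,\dots,g_m\}$ a multiple mapping on $Y$, and let $T:X\to Y$ be a topological conjugacy from $(X,F)$ to $(Y,G)$. Then $F$ is Hausdorff metric Kato chaotic (with respect to $d_H$) if and only if $G$ is Hausdorff metric Kato chaotic (with respect to $\rho_H$).
   Context: A multiple mapping $F=\{f_1,\dots,f_k\}$ on $X$ is a finite tuple of continuous self-maps of $X$; for $x\in X$ and $n\ge1$, $F(x)=\{f_1(x),\dots,f_k(x)\}$ and $F^n(x)=\{f_{i_1}f_{i_2}\cdots f_{i_n}(x)\mid i_1,\dots,i_n\in\{1,\dots,k\}\}$; for $A\subset X$, $F(A)=\bigcup_{a\in A}F(a)$. $d_H$ (resp. $\rho_H$) denotes the Hausdorff metric $d_H(A,B)=\max\{\sup_{a\in A}\inf_{b\in B}d(a,b),\sup_{b\in B}\inf_{a\in A}d(a,b)\}$ on nonempty compact subsets. $F$ is Hausdorff metric sensitive if there is $\delta>0$ such that for every nonempty open $U\subset X$ there exist $x,y\in U$, $n\in\mathbb{Z}^+$ with $d_H(F^n(x),F^n(y))>\delta$; Hausdorff metric accessible if for every $\epsilon>0$ and all nonempty open $U,V\subset X$ there exist $x\in U,y\in V,n\in\mathbb{Z}^+$ with $d_H(F^n(x),F^n(y))<\epsilon$; Hausdorff metric Kato chaotic if it is both. Here $\mathbb{Z}^+=\{1,2,\dots\}$. A topological conjugacy from $(X,F)$ to $(Y,G)$ is a homeomorphism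 $T:X\to Y$ such that $T(F(x))=G(T(x))$ for all $x\in X$. *)

From Stdlib Require Import Reals List.
Open Scope R_scope.
Import ListNotations.

Record MetricSpace := {
  carrier :> Type;
  dist : carrier -> carrier -> R;
  dist_nonneg : forall x y, 0 <= dist x y;
  dist_eq0 : forall x y, dist x y = 0 <-> x = y;
  dist_sym : forall x y, dist x y = dist y x;
  dist_tri : forall x y z, dist x z <= dist x y + dist y z
}.

Section Metric.
Variable X : MetricSpace.

Definition mopen (U : X -> Prop) : Prop :=
  forall x, U x -> exists r, 0 < r /\ forall y, dist X x y < r -> U y.

Definition mcompact : Prop :=
  forall (I : Type) (U : I -> X -> Prop),
    (forall i, mopen (U i)) -> (forall x, exists i, U i x) ->
    exists l : list I, forall x, exists i, In i l /\ U i x.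

Definition nonempty (U : X -> Prop) : Prop := exists x, U x.
End Metric.

Arguments mopen {X}.
Arguments nonempty {X}.

Definition mcontinuous {X Y : MetricSpace} (f : X -> Y) : Prop :=
  forall x eps, 0 < eps -> exists delta, 0 < delta /\
    forall y, dist X x y < delta -> dist Y (f x) (f y) < eps.

Definition homeomorphism {X Y : MetricSpace} (T : X -> Y) : Prop :=
  exists S : Y -> X, (forall x, S (T x) = x) /\ (forall y, T (S y) = y) /\
    mcontinuous T /\ mcontinuous S.

Definition multiple_mapping {X : MetricSpace} (F : list (X -> X)) : Prop :=
  F <> [] /\ forall f, In f F -> mcontinuous f.

Definition Fimg {X : Type} (F : list (X -> X)) (x : X) : list X :=
  map (fun f => f x) F.

(* F^n(x) = { f_{i1} ... f_{in} (x) }, computed as F(F^{n-1}(x)) *)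
Fixpoint Fiter {X : Type} (F : list (X -> X)) (n : nat) (x : X) : list X :=
  match n with
  | O => [x]
  | S m => flat_map (Fimg F) (Fiter F m x)
  end.

Definition lmax (l : list R) : R :=
  match l with [] => 0 | a :: t => fold_right Rmax a t end.
Definition lmin (l : list R) : R :=
  match l with [] => 0 | a :: t => fold_right Rmin a t end.

(* Hausdorff distance between finite nonempty sets (given as lists):
   sup = max and inf = min for finite nonempty sets. *)
Definition hausdorff {X : MetricSpace} (A B : list X) : R :=
  Rmax (lmax (map (fun a => lmin (map (fun b => dist X a b) B)) A))
       (lmax (map (fun b => lmin (map (fun a => dist X a b) A)) B)).

Definition H_sensitive {X : MetricSpace} (F : list (X -> X)) : Prop :=
  exists delta, 0 < delta /\
    forall U : X -> Prop, mopen U -> nonempty U ->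
      exists x y n, U x /\ U y /\ (1 <= n)%nat /\
        hausdorff (Fiter F n x) (Fiter F n y) > delta.

Definition H_accessible {X : MetricSpace} (F : list (X -> X)) : Prop :=
  forall eps, 0 < eps ->
    forall U V : X -> Prop, mopen U -> nonempty U -> mopen V -> nonempty V ->
      exists x y n, U x /\ V y /\ (1 <= n)%nat /\
        hausdorff (Fiter F n x) (Fiter F n y) < eps.

Definition H_Kato_chaotic {X : MetricSpace} (F : list (X -> X)) : Prop :=
  H_sensitive F /\ H_accessible F.

(* topological conjugacy: homeomorphism with T(F(x)) = G(T(x)) as sets *)
Definition conjugacy {X Y : MetricSpace} (T : X -> Y)
    (F : list (X -> X)) (G : list (Y -> Y)) : Prop :=
  homeomorphism T /\
  forall x z, In z (map T (Fimg F x)) <-> In z (Fimg G (T x)).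

From Pilot Require Import Defs.
From Stdlib Require Import Reals List Lra.
(* Reals exports its own [dist]; re-importing Defs lets [dist] denote the metric of Defs. *)
Import Defs.
Open Scope R_scope.
Import ListNotations.

(* A conjugacy T carries the iterate set F^n(x) onto G^n(T x), and on
   compact spaces T and T^-1 are uniformly continuous, so Hausdorff
   distances between finite sets move in a controlled way under them:
   closeness of iterate sets is pushed forward by T, and closeness in Y is
   pulled back by T^-1, which turns separation in X into separation in Y.
   Open sets of Y pull back to open sets of X.  The inverse of a conjugacy
   is a conjugacy, which gives the converse. *)

Definition same_elements {A : Type} (l l' : list A) : Prop :=
  forall z, In z l <-> In z l'.

Lemma same_elements_map {A B : Type} (f : A -> B) l l' :
  same_elements l l' -> same_elements (map f l) (map f l').
Proof.
  intros Hl z; rewrite !in_map_iff.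
  split; intros [a [<- Ha]]; exists a; split; auto; apply Hl; exact Ha.
Qed.

Lemma map_cancel {A B : Type} (f : A -> B) (g : B -> A) l :
  (forall a, g (f a) = a) -> map g (map f l) = l.
Proof. intros Hgf; rewrite map_map, (map_ext _ _ Hgf); apply map_id. Qed.

Lemma lmin_le l r : In r l -> lmin l <= r.
Proof.
  destruct l as [|a t]; simpl; [tauto|]; revert r.
  induction t as [|b t IH]; simpl; intros r Hr.
  - destruct Hr as [<-|[]]; lra.
  - pose proof (Rmin_l b (fold_right Rmin a t)).
    pose proof (Rmin_r b (fold_right Rmin a t)).
    destruct Hr as [Hr|[<-|Hr]]; try lra;
      apply Rle_trans with (fold_right Rmin a t); auto; apply IH; simpl; auto.
Qed.

Lemma lmin_in l : l <> [] -> In (lmin l) l.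
Proof.
  destruct l as [|a t]; simpl; [tauto|]; intros _.
  induction t as [|b t IH]; simpl; auto.
  unfold Rmin; destruct Rle_dec; simpl in *; tauto.
Qed.

Lemma lmax_ge l r : In r l -> r <= lmax l.
Proof.
  destruct l as [|a t]; simpl; [tauto|]; revert r.
  induction t as [|b t IH]; simpl; intros r Hr.
  - destruct Hr as [<-|[]]; lra.
  - pose proof (Rmax_l b (fold_right Rmax a t)).
    pose proof (Rmax_r b (fold_right Rmax a t)).
    destruct Hr as [Hr|[<-|Hr]]; try lra;
      apply Rle_trans with (fold_right Rmax a t); auto; apply IH; simpl; auto.
Qed.

Lemma lmax_in l : l <> [] -> In (lmax l) l.
Proof.
  destruct l as [|a t]; simpl; [tauto|]; intros _.
  induction t as [|b t IH]; simpl; auto.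
  unfold Rmax; destruct Rle_dec; simpl in *; tauto.
Qed.

Lemma same_elements_nil {A : Type} (l : list A) :
  same_elements l [] -> l = [].
Proof. destruct l as [|a t]; auto; intros H; destruct (proj1 (H a)); simpl; auto. Qed.

Lemma lmin_same l l' : same_elements l l' -> lmin l = lmin l'.
Proof.
  intros H; destruct l' as [|a' t'].
  - rewrite (same_elements_nil _ H); reflexivity.
  - assert (Hl : l <> []) by (intros ->; apply (proj2 (H a')); simpl; auto).
    apply Rle_antisym; apply lmin_le; apply H, lmin_in; [discriminate | exact Hl].
Qed.

Lemma lmax_same l l' : same_elements l l' -> lmax l = lmax l'.
Proof.
  intros H; destruct l' as [|a' t'].
  - rewrite (same_elements_nil _ H); reflexivity.
  - assert (Hl : l <> []) by (intros ->; apply (proj2 (H a')); simpl; auto).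
    apply Rle_antisym; apply lmax_ge; apply H, lmax_in; [exact Hl | discriminate].
Qed.

Section Hausdorff.
Variable X : MetricSpace.

Definition excess (A B : list X) : R :=
  lmax (map (fun a => lmin (map (fun b => dist X a b) B)) A).

Lemma hausdorff_excess (A B : list X) : hausdorff A B = Rmax (excess A B) (excess B A).
Proof.
  unfold hausdorff, excess; f_equal.
  apply f_equal, map_ext; intros b; apply f_equal, map_ext; intros a; apply dist_sym.
Qed.

Lemma excess_same (A A' B B' : list X) :
  same_elements A A' -> same_elements B B' -> excess A B = excess A' B'.
Proof.
  intros HA HB; unfold excess; apply lmax_same.
  rewrite (map_ext _ (fun a => lmin (map (fun b => dist X a b) B'))).
  - apply same_elements_map, HA.
  - intros a; apply lmin_same, same_elements_map, HB.
Qed.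

Lemma hausdorff_same (A A' B B' : list X) :
  same_elements A A' -> same_elements B B' -> hausdorff A B = hausdorff A' B'.
Proof. intros HA HB; rewrite !hausdorff_excess; f_equal; apply excess_same; auto. Qed.

Definition within (A B : list X) (e : R) : Prop :=
  forall a, In a A -> exists b, In b B /\ dist X a b < e.

Lemma within_of_excess_lt (A B : list X) e :
  B <> [] -> excess A B < e -> within A B e.
Proof.
  intros HB H a Ha.
  assert (HdB : map (fun b => dist X a b) B <> [])
    by (destruct B; [congruence | discriminate]).
  destruct (proj1 (in_map_iff _ _ _) (lmin_in _ HdB)) as [b [Hb HbB]].
  exists b; split; auto; rewrite Hb.
  eapply Rle_lt_trans; [apply lmax_ge | exact H].
  unfold excess; apply (in_map (fun a => lmin (map (fun b => dist X a b) B))), Ha.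
Qed.

Lemma excess_lt_of_within (A B : list X) e : A <> [] -> within A B e -> excess A B < e.
Proof.
  intros HA H; unfold excess.
  assert (HmA : map (fun a => lmin (map (fun b => dist X a b) B)) A <> [])
    by (destruct A; [congruence | discriminate]).
  destruct (proj1 (in_map_iff _ _ _) (lmax_in _ HmA)) as [a [<- Ha]].
  destruct (H a Ha) as [b [Hb Hab]].
  eapply Rle_lt_trans; [apply lmin_le, (in_map (fun b => dist X a b) B b Hb) | exact Hab].
Qed.

Lemma hausdorff_lt_iff (A B : list X) e :
  A <> [] -> B <> [] -> hausdorff A B < e <-> within A B e /\ within B A e.
Proof.
  intros HA HB; rewrite hausdorff_excess; split.
  - intros H; split; apply within_of_excess_lt; auto;
      eapply Rle_lt_trans; [apply Rmax_l | exact H | apply Rmax_r | exact H].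
  - intros [HAB HBA]; apply Rmax_lub_lt; apply excess_lt_of_within; auto.
Qed.

End Hausdorff.

Arguments within {X}.

Lemma within_map (X Y : MetricSpace) (f : X -> Y) (A B : list X) e e' :
  (forall a b, dist X a b < e -> dist Y (f a) (f b) < e') ->
  within A B e -> within (map f A) (map f B) e'.
Proof.
  intros Hf H z Hz; apply in_map_iff in Hz; destruct Hz as [a [<- Ha]].
  destruct (H a Ha) as [b [Hb Hab]]; exists (f b); split; [apply in_map|]; auto.
Qed.

Lemma hausdorff_map_lt (X Y : MetricSpace) (f : X -> Y) (A B : list X) e e' :
  A <> [] -> B <> [] ->
  (forall a b, dist X a b < e -> dist Y (f a) (f b) < e') ->
  hausdorff A B < e -> hausdorff (map f A) (map f B) < e'.
Proof.
  intros HA HB Hf; rewrite !hausdorff_lt_iff; auto;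
    try (intros E; apply map_eq_nil in E; contradiction).
  intros [HAB HBA]; split; eapply within_map; eauto.
Qed.

Definition uniformly_continuous {X Y : MetricSpace} (f : X -> Y) : Prop :=
  forall eps, 0 < eps -> exists delta, 0 < delta /\
    forall a b, dist X a b < delta -> dist Y (f a) (f b) < eps.

Lemma ball_open (X : MetricSpace) (c : X) r : mopen (fun y => dist X c y < r).
Proof.
  intros y Hy; exists (r - dist X c y); split; [lra|].
  intros z Hz; pose proof (dist_tri X c y z); lra.
Qed.

(* Lebesgue-number argument: cover X by balls B(c, r/2), where B(c, r) is
   mapped into an eps/2-ball; delta is the least radius of a finite subcover. *)
Lemma compact_uniformly_continuous (X Y : MetricSpace) (f : X -> Y) :
  mcompact X -> mcontinuous f -> uniformly_continuous f.
Proof.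
  intros HK Hf eps He.
  set (I := {p : X * R | 0 < snd p /\
              forall y, dist X (fst p) y < snd p -> dist Y (f (fst p)) (f y) < eps / 2}).
  set (radius := fun i : I => snd (proj1_sig i) / 2).
  destruct (HK I (fun i y => dist X (fst (proj1_sig i)) y < radius i)) as [l Hl].
  - intros i; apply ball_open.
  - intros x; destruct (Hf x (eps / 2)) as [r [Hr Hx]]; [lra|].
    exists (exist _ (x, r) (conj Hr Hx)); unfold radius; simpl.
    rewrite (proj2 (dist_eq0 X x x) eq_refl); lra.
  - set (delta := lmin (1 :: map radius l)).
    exists delta; split.
    + assert (Hin : In delta (1 :: map radius l)) by (apply lmin_in; discriminate).
      destruct Hin as [E|Hin]; [rewrite <- E; lra|].
      apply in_map_iff in Hin; destruct Hin as [i [E _]].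
      rewrite <- E; unfold radius; destruct (proj2_sig i) as [Hr _]; lra.
    + intros a b Hab; destruct (Hl a) as [i [Hi Ha]].
      assert (Hdelta : delta <= radius i) by (apply lmin_le; right; apply in_map, Hi).
      destruct i as [[c r] [Hr Hcr]]; unfold radius in *; simpl in *.
      pose proof (dist_tri X c a b).
      pose proof (Hcr a ltac:(lra)); pose proof (Hcr b ltac:(lra)).
      pose proof (dist_tri Y (f a) (f c) (f b)); pose proof (dist_sym Y (f a) (f c)).
      lra.
Qed.

Lemma mopen_preimage (X Y : MetricSpace) (f : X -> Y) (U : Y -> Prop) :
  mcontinuous f -> mopen U -> mopen (fun x => U (f x)).
Proof.
  intros Hf HU x Hx; destruct (HU _ Hx) as [r [Hr H]].
  destruct (Hf x r Hr) as [d [Hd H']]; exists d; split; auto.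
Qed.

Lemma Fiter_nonempty {X : Type} (F : list (X -> X)) n x :
  F <> [] -> Fiter F n x <> [].
Proof.
  intros HF; induction n as [|n IH]; simpl; [discriminate|].
  destruct (Fiter F n x) as [|a l]; [contradiction|].
  destruct F as [|f F]; [contradiction | discriminate].
Qed.

Lemma Fiter_conj {X Y : Type} (T : X -> Y) F G :
  (forall x, same_elements (map T (Fimg F x)) (Fimg G (T x))) ->
  forall n x, same_elements (Fiter G n (T x)) (map T (Fiter F n x)).
Proof.
  intros Hc n; induction n as [|n IH]; intros x z; simpl; [reflexivity|].
  rewrite in_flat_map, in_map_iff; split.
  - intros [w [Hw Hz]]; apply IH, in_map_iff in Hw; destruct Hw as [a [<- Ha]].
    apply Hc, in_map_iff in Hz; destruct Hz as [c [<- Hac]].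
    exists c; split; auto; apply in_flat_map; eauto.
  - intros [c [<- Hc']]; apply in_flat_map in Hc'; destruct Hc' as [a [Ha Hac]].
    exists (T a); split; [apply IH, in_map, Ha | apply Hc, in_map, Hac].
Qed.

Section Conjugacy.
Variables (X Y : MetricSpace) (F : list (X -> X)) (G : list (Y -> Y)).
Variables (T : X -> Y) (S : Y -> X).
Hypothesis ST : forall x, S (T x) = x.
Hypothesis TS : forall y, T (S y) = y.
Hypothesis T_continuous : mcontinuous T.
Hypothesis conj_img : forall x, same_elements (map T (Fimg F x)) (Fimg G (T x)).

Lemma Fiter_conj_inv n x : same_elements (map S (Fiter G n (T x))) (Fiter F n x).
Proof.
  rewrite <- (map_cancel T S (Fiter F n x) ST).
  apply same_elements_map, Fiter_conj, conj_img.
Qed.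

Lemma preimage_nonempty (U : Y -> Prop) : nonempty U -> nonempty (fun x => U (T x)).
Proof. intros [y Hy]; exists (S y); rewrite TS; exact Hy. Qed.

Lemma H_sensitive_conj :
  G <> [] -> uniformly_continuous S -> H_sensitive F -> H_sensitive G.
Proof.
  intros HG HS [delta [Hdelta Hsens]].
  destruct (HS delta Hdelta) as [eta [Heta HSeta]].
  exists (eta / 2); split; [lra|]; intros U HU HUne.
  destruct (Hsens _ (mopen_preimage _ _ T U T_continuous HU) (preimage_nonempty U HUne))
    as [x [x' [n [Hx [Hx' [Hn Hsep]]]]]].
  exists (T x), (T x'), n; repeat split; auto.
  apply Rnot_le_lt; intros Hclose.
  assert (Hback : hausdorff (map S (Fiter G n (T x))) (map S (Fiter G n (T x'))) < delta)
    by (apply (hausdorff_map_lt _ _ _ _ _ eta); auto using Fiter_nonempty; lra).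
  rewrite (hausdorff_same _ _ _ _ _ (Fiter_conj_inv n x) (Fiter_conj_inv n x')) in Hback.
  lra.
Qed.

Lemma H_accessible_conj :
  F <> [] -> uniformly_continuous T -> H_accessible F -> H_accessible G.
Proof.
  intros HF HT Hacc eps Heps U V HU HUne HV HVne.
  destruct (HT eps Heps) as [eta [Heta HTeta]].
  destruct (Hacc eta Heta _ _
              (mopen_preimage _ _ T U T_continuous HU) (preimage_nonempty U HUne)
              (mopen_preimage _ _ T V T_continuous HV) (preimage_nonempty V HVne))
    as [x [y [n [Hx [Hy [Hn Hclose]]]]]].
  exists (T x), (T y), n; repeat split; auto.
  rewrite (hausdorff_same _ _ _ _ _
             (Fiter_conj T F G conj_img n x) (Fiter_conj T F G conj_img n y)).
  apply (hausdorff_map_lt _ _ _ _ _ eta); auto using Fiter_nonempty.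
Qed.

End Conjugacy.

Lemma conjugacy_sym (X Y : MetricSpace) (F : list (X -> X)) (G : list (Y -> Y))
  (T : X -> Y) :
  conjugacy T F G -> exists S, conjugacy S G F.
Proof.
  intros [[S [ST [TS [HT HS]]]] Hc]; exists S; split; [exists T; auto|].
  intros y; change (same_elements (map S (Fimg G y)) (Fimg F (S y))).
  rewrite <- (map_cancel T S (Fimg F (S y)) ST); apply same_elements_map.
  intros z; rewrite <- (TS y) at 1; symmetry; apply Hc.
Qed.

Lemma H_Kato_chaotic_conj (X Y : MetricSpace) (F : list (X -> X)) (G : list (Y -> Y))
  (T : X -> Y) :
  mcompact X -> mcompact Y -> F <> [] -> G <> [] ->
  conjugacy T F G -> H_Kato_chaotic F -> H_Kato_chaotic G.
Proof.
  intros HX HY HF HG [[S [ST [TS [HT HS]]]] Hc] [Hsens Hacc]; split.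
  - eapply H_sensitive_conj; eauto using compact_uniformly_continuous.
  - eapply H_accessible_conj; eauto using compact_uniformly_continuous.
Qed.

Theorem corollary4p4 (X Y : MetricSpace) (F : list (X -> X)) (G : list (Y -> Y))
  (T : X -> Y) :
  mcompact X -> mcompact Y ->
  multiple_mapping F -> multiple_mapping G ->
  conjugacy T F G ->
  (H_Kato_chaotic F <-> H_Kato_chaotic G).
Proof.
  intros HX HY [HF _] [HG _] HT; split.
  - apply (H_Kato_chaotic_conj X Y F G T); auto.
  - destruct (conjugacy_sym X Y F G T HT) as [S HS].
    apply (H_Kato_chaotic_conj Y X G F S); auto.
Qed.
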